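(* Let $n \equiv 0 \pmod 4$ and let $C$ be a self-dual binary linear $(n,k,d)$-code. If $G$ is a generator matrix of $C$ in standard form, then the number of rows of $G$ whose weight is singly-even (i.e. congruent to $2 \bmod 4$) is even.
   Context: A binary linear $(n,k,d)$-code is a $k$-dimensional subspace of $\mathbb{F}_2^n$ with minimum distance $d$. For $x,y\in\mathbb{F}_2^n$ the inner product is $\sum_i x_iy_i \in \mathbb{F}_2$; the dual code is $C^{\perp}=\{c\in\mathbb{F}_2^n : c\cdot x=0 \ \forall x\in C\}$, and $C$ is self-dual if $C=C^{\perp}$ (so $k=n/2$). A generator matrix is in standard form if it equals $(I_k \mid A)$ with $I_k$ the $k\times k$ identity matrix and $A$ a $k\times k$ binary matrix. The weight $w(x)$ of a vector is its number of nonzero coordinates; $x$ is singly-even if $w(x)\equiv 2 \pmod 4$ and doubly-even if $w(x)\equiv 0\pmod 4$. *)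

From mathcomp Require Import all_boot all_order all_algebra.
Set Implicit Arguments. Unset Strict Implicit. Unset Printing Implicit Defensive.
Import GRing.Theory.
Local Open Scope ring_scope.

Definition ip n (x y : 'rV['F_2]_n) : 'F_2 := \sum_(i < n) x 0 i * y 0 i.

(* A linear code of length n is represented by a matrix whose row space is the
   code; membership of a vector x is (x <= C)%MS. *)
Definition in_code n (C : 'M['F_2]_n) (x : 'rV['F_2]_n) : bool := (x <= C)%MS.

Definition in_dual n (C : 'M['F_2]_n) (x : 'rV['F_2]_n) : bool :=
  [forall c : 'rV['F_2]_n, in_code C c ==> (ip c x == 0)].

Definition self_dual n (C : 'M['F_2]_n) : Prop :=
  forall x : 'rV['F_2]_n, in_code C x = in_dual C x.

Definition generator_matrix k n (G : 'M['F_2]_(k, n)) (C : 'M['F_2]_n) : Prop :=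
  row_free G /\ (G == C)%MS.

Definition wt n (x : 'rV['F_2]_n) : nat := #|[set j : 'I_n | x 0 j != 0]|.

Definition singly_even n (x : 'rV['F_2]_n) : bool := (wt x %% 4 == 2)%N.

(** Over [F_2], [wt (x + y) = wt x + wt y - 2 |supp x ∩ supp y|] and
    [x · y] is the parity of [|supp x ∩ supp y|]; hence weights add modulo 4
    along sums of mutually orthogonal vectors.  In a self-dual code every
    codeword has even weight, so [c · 1 = c · c = 0] puts the all-ones vector in
    [C^⊥ = C].  With a generator matrix [(I | A)] the only combination of rows
    giving [1] is the sum of all rows, whence
    [n = wt 1 ≡ Σ wt(row i) ≡ 2 · #(singly-even rows)  (mod 4)],
    and [4 | n] forces that number to be even. *)
From mathcomp Require Import all_boot all_order all_algebra.
From mathcomp Require Import zify.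
Set Implicit Arguments. Unset Strict Implicit. Unset Printing Implicit Defensive.
Local Open Scope ring_scope.
Import GRing.Theory.

Lemma F2_cases (a : 'F_2) : a = 0 \/ a = 1.
Proof. by case: a => [[|[|m]]] //= ?; [left | right]; apply/val_inj. Qed.

Lemma natr_F2_eq0 (m : nat) : ((m%:R : 'F_2) == 0) = ~~ odd m.
Proof. by rewrite -(inj_eq val_inj) /= val_Fp_nat // modn2; case: (odd m). Qed.

Definition supp n (x : 'rV['F_2]_n) : {set 'I_n} := [set j | x 0 j != 0].

Lemma wtE n (x : 'rV['F_2]_n) : wt x = #|supp x|.
Proof. by []. Qed.

Lemma supp_const1 n : supp (const_mx 1 : 'rV['F_2]_n) = setT.
Proof. by apply/setP => j; rewrite !inE mxE oner_eq0. Qed.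

Lemma supp_add n (x y : 'rV['F_2]_n) :
  supp (x + y) = (supp x :|: supp y) :\: (supp x :&: supp y).
Proof.
apply/setP => j; rewrite !inE mxE.
by case: (F2_cases (x 0 j)) => ->; case: (F2_cases (y 0 j)) => ->.
Qed.

Lemma ip_card n (x y : 'rV['F_2]_n) : ip x y = #|supp x :&: supp y|%:R.
Proof.
rewrite /ip -sum1_card natr_sum [RHS]big_mkcond; apply: eq_bigr => j _; rewrite !inE.
by case: (F2_cases (x 0 j)) => ->; case: (F2_cases (y 0 j)) => ->;
  rewrite ?mulr0 ?mul0r ?mulr1 ?eqxx ?oner_eq0.
Qed.

Lemma ip_const1r n (x : 'rV['F_2]_n) : ip x (const_mx 1) = ip x x.
Proof. by rewrite !ip_card supp_const1 setIT setIid. Qed.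

Lemma wt0 n : wt (0 : 'rV['F_2]_n) = 0%N.
Proof. by apply/eqP; rewrite cards_eq0; apply/eqP/setP => j; rewrite !inE mxE eqxx. Qed.

Lemma wt_const1 n : wt (const_mx 1 : 'rV['F_2]_n) = n.
Proof. by rewrite wtE supp_const1 cardsT card_ord. Qed.

Lemma wt_add n (x y : 'rV['F_2]_n) :
  (wt (x + y) + 2 * #|supp x :&: supp y| = wt x + wt y)%N.
Proof.
have meet_sub : supp x :&: supp y \subset supp x :|: supp y.
  by rewrite subIset ?subsetUl.
rewrite !wtE supp_add (cardsDS meet_sub).
have := cardsUI (supp x) (supp y); have := subset_leq_card meet_sub; lia.
Qed.

Lemma wt_add_orthogonal n (x y : 'rV['F_2]_n) :
  ip x y = 0 -> (wt (x + y) = wt x + wt y %[mod 4])%N.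
Proof.
move/eqP; rewrite ip_card natr_F2_eq0 -dvdn2 => even_meet.
have := wt_add x y; lia.
Qed.

Definition self_orthogonal n (C : 'M['F_2]_n) : Prop :=
  forall x y, in_code C x -> in_code C y -> ip x y = 0.

Section SelfOrthogonal.

Variables (n : nat) (C : 'M['F_2]_n).

Lemma self_dual_orthogonal : self_dual C -> self_orthogonal C.
Proof.
by move=> sdC x y Cx; rewrite sdC => /forallP/(_ x)/implyP/(_ Cx)/eqP.
Qed.

Hypothesis soC : self_orthogonal C.

Lemma self_orthogonal_wt_even x : in_code C x -> ~~ odd (wt x).
Proof.
by move=> Cx; move/eqP: (soC Cx Cx); rewrite ip_card setIid natr_F2_eq0.
Qed.

Lemma wt_sum_mod4 (I : Type) (r : I -> 'rV['F_2]_n) (s : seq I) :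
  (forall i, in_code C (r i)) ->
  (wt (\sum_(i <- s) r i) = \sum_(i <- s) wt (r i) %[mod 4])%N.
Proof.
move=> Cr; elim: s => [|i s IHs]; first by rewrite !big_nil wt0.
have Csum : in_code C (\sum_(j <- s) r j) by apply: summx_sub => j _; apply: Cr.
rewrite !big_cons addrC wt_add_orthogonal ?soC //.
by apply/eqP; rewrite addnC eqn_modDl; apply/eqP.
Qed.

End SelfOrthogonal.

Lemma self_dual_const1 n (C : 'M['F_2]_n) : self_dual C -> in_code C (const_mx 1).
Proof.
move=> sdC; rewrite sdC; apply/forallP => c; apply/implyP => Cc.
by rewrite ip_const1r (self_dual_orthogonal sdC Cc Cc).
Qed.

Lemma submx_std_form (F : fieldType) k m (A : 'M[F]_(k, m)) (u : 'rV_(k + m)) :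
  (u <= row_mx 1%:M A)%MS -> u = lsubmx u *m row_mx 1%:M A.
Proof. by case/submxP => x ->; rewrite {2}mul_mx_row mulmx1 row_mxKl. Qed.

Lemma mul_const1_mx (R : pzSemiRingType) k m (M : 'M[R]_(k, m)) :
  const_mx 1 *m M = \sum_i row i M.
Proof. by rewrite mulmx_sum_row; apply: eq_bigr => i _; rewrite mxE scale1r. Qed.

Lemma sum_even_mod4 (I : finType) (w : I -> nat) :
  (forall i, ~~ odd (w i)) ->
  (\sum_i w i = 2 * #|[set i | w i %% 4 == 2]| %[mod 4])%N.
Proof.
move=> w_even; rewrite -sum1dep_card big_distrr [in RHS]big_mkcond /=.
rewrite -modn_summ -[in RHS]modn_summ; congr (_ %% 4)%N; apply: eq_bigr => i _.
by have := w_even i; rewrite -dvdn2; case: eqP; lia.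
Qed.

Lemma double_mod4_even (m c : nat) :
  (4 %| m)%N -> (m = 2 * c %[mod 4])%N -> ~~ odd c.
Proof. by rewrite -dvdn2; lia. Qed.

Theorem mainTheorem1 (k : nat) (C : 'M['F_2]_(k + k)) (A : 'M['F_2]_k) :
  (4 %| k + k)%N ->
  self_dual C ->
  generator_matrix (row_mx 1%:M A) C ->
  ~~ odd #|[set i : 'I_k | singly_even (row i (row_mx 1%:M A))]|.
Proof.
move=> n4 sdC [_ /andP [GC CG]]; set G := row_mx 1%:M A.
have soC := self_dual_orthogonal sdC.
have C_rows i : in_code C (row i G) := submx_trans (row_sub i G) GC.
have const1_rows : const_mx 1 = \sum_i row i G.
  have /submx_std_form -> := submx_trans (self_dual_const1 sdC) CG.
  by rewrite -mul_const1_mx; congr (_ *m _); apply/matrixP => i j; rewrite !mxE.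
have := wt_sum_mod4 soC (index_enum 'I_k) C_rows.
rewrite -const1_rows wt_const1.
rewrite sum_even_mod4 => [|i]; last exact: (self_orthogonal_wt_even soC (C_rows i)).
exact: double_mod4_even n4.
Qed.
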